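(* Let $v$ be a typical weight and let $X$ be a reflexive initial space such that for every $f\in X$ and $0\le r<1$ the function $f_r(z)=f(rz)$ is in $X$ and $\sup_{0\le r<1}\|f_r\|_X\le C\|f\|_X$ for a constant $C$ independent of $f$. Let $T$ be an intrinsic operator on $\mathcal{H}(\mathbb{D})$. (a) If $Tf_r\in H_{v,0}$ for all $f\in X$, $0\le r<1$, then $T:X\to H_v$ is bounded if and only if $T:X\to H_{v,0}$ is bounded. (b) If $Tf_r\in\mathcal{B}_{v,0}$ for all $f\in X$, $0\le r<1$, then $T:X\to\mathcal{B}_v$ is bounded if and only if $T:X\to\mathcal{B}_{v,0}$ is bounded.
   Context: $\mathcal{H}(\mathbb{D})$ is the space of holomorphic functions on the unit disk $\mathbb{D}$ with the topology $\tau_{uc}$ of uniform convergence on compact subsets. A linear operator $T$ on $\mathcal{H}(\mathbb{D})$ is intrinsic if it maps $\tau_{uc}$-convergent sequences to $\tau_{uc}$-convergent sequences. An initial space is a Banach space $X\subset\mathcal{H}(\mathbb{D})$ containing the polynomials such that every sequence in the closed unit ball of $X$ has a subsequence converging in $\tau_{uc}$ to some function in $X$. A typical weight is a continuous radial $v:\mathbb{D}\to(0,1]$, non-increasing in $|z|$, with $v(z)\to0$ as $|z|\to1$. $H_v=\{f:\sup_zv(z)|f(z)|<\infty\}$ (norm that supremum), $\mathcal{B}_v=\{f:\sup_zv(z)|f'(z)|<\infty\}$ (norm $|f(0)|+\sup_zv(z)|f'(z)|$), and $H_{v,0}$, $\mathcal{B}_{v,0}$ the subspaces where $v(z)|f(z)|\to0$,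 resp. $v(z)|f'(z)|\to0$, as $|z|\to1$. *)

From Stdlib Require Import Reals.
From Coquelicot Require Import Coquelicot.
Open Scope R_scope.

Definition inD (z : C) : Prop := Cmod z < 1.

Definition holo (f : C -> C) : Prop :=
  forall z, inD z -> ex_derive (K := C_AbsRing) (V := C_NormedModule) f z.

Definition fadd (f g : C -> C) : C -> C := fun z => Cplus (f z) (g z).
Definition fscale (a : C) (f : C -> C) : C -> C := fun z => Cmult a (f z).
Definition fzero : C -> C := fun _ => RtoC 0.
Definition fsub (f g : C -> C) : C -> C := fadd f (fscale (RtoC (-1)) g).

(* elements of H(D) are identified when they agree on D *)
Definition eqD (f g : C -> C) : Prop := forall z, inD z -> f z = g z.

Definition dil (r : R) (f : C -> C) : C -> C := fun z => f (Cmult (RtoC r) z).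

Definition poly_fun (c : nat -> C) (n : nat) : C -> C :=
  fun z => sum_n (G := C_AbelianMonoid) (fun k => Cmult (c k) (pow_n (K := C_Ring) z k)) n.

(* uniform convergence on compact subsets of D (tau_uc); every compact subset of
   D lies in a closed disk {|z| <= r}, r < 1, and conversely these are compact *)
Definition ucc_conv (fn : nat -> C -> C) (f : C -> C) : Prop :=
  forall r, 0 <= r < 1 -> forall eps, 0 < eps ->
    exists N, forall n, (N <= n)%nat -> forall z, Cmod z <= r ->
      Cmod (Cminus (fn n z) (f z)) < eps.

Definition lin_op_HD (T : (C -> C) -> (C -> C)) : Prop :=
  (forall f, holo f -> holo (T f)) /\
  (forall f g, holo f -> holo g -> eqD f g -> eqD (T f) (T g)) /\
  (forall a b f g, holo f -> holo g ->
     eqD (T (fadd (fscale a f) (fscale b g))) (fadd (fscale a (T f)) (fscale b (T g)))).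

Definition intrinsic (T : (C -> C) -> (C -> C)) : Prop :=
  lin_op_HD T /\
  forall (fn : nat -> C -> C) (f : C -> C),
    (forall n, holo (fn n)) -> holo f -> ucc_conv fn f ->
    exists g, holo g /\ ucc_conv (fun n => T (fn n)) g.

Definition typical_weight (v : C -> R) : Prop :=
  (forall z, inD z -> continuous (v : C_UniformSpace -> R_UniformSpace) z) /\
  (forall z, inD z -> 0 < v z <= 1) /\
  (forall z w, inD z -> inD w -> Cmod z = Cmod w -> v z = v w) /\
  (forall z w, inD z -> inD w -> Cmod z <= Cmod w -> v w <= v z) /\
  (forall eps, 0 < eps -> exists delta, 0 < delta /\
     forall z, inD z -> 1 - delta < Cmod z -> v z < eps).

(* Banach space X ⊂ H(D) given by a carrier predicate and a norm *)
Definition banach_sub (X : (C -> C) -> Prop) (nX : (C -> C) -> R) : Prop :=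
  (forall f, X f -> holo f) /\
  (forall f g, X f -> holo g -> eqD f g -> X g /\ nX g = nX f) /\
  X fzero /\
  (forall a b f g, X f -> X g -> X (fadd (fscale a f) (fscale b g))) /\
  (forall f, X f -> 0 <= nX f) /\
  (forall f, X f -> (nX f = 0 <-> eqD f fzero)) /\
  (forall a f, X f -> nX (fscale a f) = Cmod a * nX f) /\
  (forall f g, X f -> X g -> nX (fadd f g) <= nX f + nX g) /\
  (forall un : nat -> C -> C, (forall n, X (un n)) ->
     (forall eps, 0 < eps -> exists N, forall m n, (N <= m)%nat -> (N <= n)%nat ->
        nX (fsub (un m) (un n)) < eps) ->
     exists f, X f /\ forall eps, 0 < eps -> exists N, forall n, (N <= n)%nat ->
        nX (fsub (un n) f) < eps).

Definition initial_space (X : (C -> C) -> Prop) (nX : (C -> C) -> R) : Prop :=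
  banach_sub X nX /\
  (forall c n, X (poly_fun c n)) /\
  (forall fn : nat -> C -> C, (forall n, X (fn n) /\ nX (fn n) <= 1) ->
     exists (phi : nat -> nat) (f : C -> C),
       (forall n, (phi n < phi (S n))%nat) /\ X f /\ ucc_conv (fun n => fn (phi n)) f).

Definition dual_bound (X : (C -> C) -> Prop) (nX : (C -> C) -> R)
    (phi : (C -> C) -> C) (K : R) : Prop :=
  forall f, X f -> Cmod (phi f) <= K * nX f.
Definition in_dual (X : (C -> C) -> Prop) (nX : (C -> C) -> R) (phi : (C -> C) -> C) : Prop :=
  (forall a b f g, X f -> X g ->
     phi (fadd (fscale a f) (fscale b g)) = Cplus (Cmult a (phi f)) (Cmult b (phi g))) /\
  exists K, dual_bound X nX phi K.

(* bidual X** : bounded linear functionals on X* (the dual norm of phi is the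
   infimum of its bounds K, so |Phi phi| <= M ||phi|| iff |Phi phi| <= M K for all bounds K) *)
Definition in_bidual (X : (C -> C) -> Prop) (nX : (C -> C) -> R)
    (Phi : ((C -> C) -> C) -> C) : Prop :=
  (forall a b phi psi, in_dual X nX phi -> in_dual X nX psi ->
     Phi (fun f => Cplus (Cmult a (phi f)) (Cmult b (psi f)))
       = Cplus (Cmult a (Phi phi)) (Cmult b (Phi psi))) /\
  exists M, forall phi K, in_dual X nX phi -> dual_bound X nX phi K ->
     Cmod (Phi phi) <= M * K.

Definition reflexive (X : (C -> C) -> Prop) (nX : (C -> C) -> R) : Prop :=
  forall Phi, in_bidual X nX Phi ->
    exists f, X f /\ forall phi, in_dual X nX phi -> Phi phi = phi f.

Definition Hv (v : C -> R) (f : C -> C) : Prop :=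
  holo f /\ exists K, forall z, inD z -> v z * Cmod (f z) <= K.
Definition Hv0 (v : C -> R) (f : C -> C) : Prop :=
  holo f /\ forall eps, 0 < eps -> exists delta, 0 < delta /\
    forall z, inD z -> 1 - delta < Cmod z -> v z * Cmod (f z) < eps.
Definition Bv (v : C -> R) (f : C -> C) : Prop :=
  holo f /\ exists K, forall z, inD z -> v z * Cmod (C_derive f z) <= K.
Definition Bv0 (v : C -> R) (f : C -> C) : Prop :=
  holo f /\ forall eps, 0 < eps -> exists delta, 0 < delta /\
    forall z, inD z -> 1 - delta < Cmod z -> v z * Cmod (C_derive f z) < eps.

Definition bounded_into_Hnorm (X : (C -> C) -> Prop) (nX : (C -> C) -> R)
    (v : C -> R) (T : (C -> C) -> (C -> C)) : Prop :=
  exists M, forall f, X f -> forall z, inD z -> v z * Cmod (T f z) <= M * nX f.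
Definition bounded_into_Bnorm (X : (C -> C) -> Prop) (nX : (C -> C) -> R)
    (v : C -> R) (T : (C -> C) -> (C -> C)) : Prop :=
  exists M, forall f, X f -> forall z, inD z ->
    Cmod (T f (RtoC 0)) + v z * Cmod (C_derive (T f) z) <= M * nX f.

(* Suppose T : X -> H_v is bounded but v |T f| does not vanish at the boundary.
   Pick z_n with |z_n| -> 1 and v(z_n) |T f(z_n)| >= eps.  The functionals
   phi_n = v(z_n) (T . )(z_n) are uniformly bounded on X, and phi_n(f_r) -> 0 for each
   r since T f_r is in H_{v,0}.  Along a free ultrafilter U on nat, phi_n has a weak-*
   limit psi in X*.  The dilations f_{r_k} (r_k -> 1) are bounded in X and converge to f
   pointwise; the U-limit of phi(f_{r_k}) is an element of X** which reflexivity
   represents by some g in X, and testing it on point evaluations (bounded on an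
   initial space) shows g = f.  Hence lim_U phi_n(f) = psi(f) = lim_U psi(f_{r_k}) = 0,
   contradicting |phi_n(f)| >= eps.  The Bloch case is the same with (T f)'. *)

From Stdlib Require Import Reals Lra Lia Classical ClassicalEpsilon FunctionalExtensionality.
From Coquelicot Require Import Coquelicot.
From mathcomp Require filter ssrnat ssrbool.
Open Scope R_scope.

Class FreeUltrafilter (U : (nat -> Prop) -> Prop) : Prop := {
  uf_proper :: ProperFilter U;
  uf_ultra : forall A, U A \/ U (fun n => ~ A n);
  uf_free : filter_le U eventually }.

Lemma free_ultrafilter_exists : exists U, FreeUltrafilter U.
Proof.
  destruct (filter.ultraFilterLemma filter.eventually_filter) as [U [HU HeU]].
  pose proof (filter.ultra_proper (UltraFilter := HU)) as HUp.
  exists U; split.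
  - split; [intros P; exact (filter.filter_ex (FF := HUp))|].
    split; [exact filter.filterT | intros P Q; exact (@filter.filterI _ _ _ P Q) |].
    intros P Q HPQ. exact (filter.filterS HPQ).
  - intro A. exact (filter.in_ultra_setVsetC A HU).
  - intros P [N HN]. apply HeU. exists N; [constructor|].
    intros n Hn. apply HN. exact (ssrbool.elimT ssrnat.leP Hn).
Qed.

Lemma filterlim_Clin_comb {T} {F : (T -> Prop) -> Prop} {FF : Filter F}
    (a b : T -> C) (la lb al be : C) :
  filterlim a F (locally la) -> filterlim b F (locally lb) ->
  filterlim (fun n => Cplus (Cmult al (a n)) (Cmult be (b n))) F
    (locally (Cplus (Cmult al la) (Cmult be lb))).
Proof.
  intros Ha Hb.
  apply (filterlim_comp_2 (fun n => Cmult al (a n)) (fun n => Cmult be (b n))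
           (plus (G := C_NormedModule))
           (G := locally (T := C_NormedModule) (Cmult al la))
           (H := locally (T := C_NormedModule) (Cmult be lb)));
    [| | exact (filterlim_plus (V := C_NormedModule) (Cmult al la) (Cmult be lb))].
  - exact (filterlim_comp _ _ _ _ _ _ _ _ Ha (filterlim_scal_r (V := C_NormedModule) al la)).
  - exact (filterlim_comp _ _ _ _ _ _ _ _ Hb (filterlim_scal_r (V := C_NormedModule) be lb)).
Qed.

Lemma filterlim_Cmod {T} {F : (T -> Prop) -> Prop} (a : T -> C) (l : C) :
  filterlim a F (locally l) -> filterlim (fun n => Cmod (a n)) F (locally (Cmod l)).
Proof.
  intro Ha. exact (filterlim_comp _ _ _ _ _ _ _ _ Ha (filterlim_norm (V := C_NormedModule) l)).
Qed.

Lemma filterlim_Cmod_le {T} {F : (T -> Prop) -> Prop} {FF : ProperFilter F}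
    (a : T -> C) (l : C) (B : R) :
  filterlim a F (locally l) -> F (fun n => Cmod (a n) <= B) -> Cmod l <= B.
Proof.
  intros Ha HB.
  exact (filterlim_le (F := F) _ _ (Cmod l) B HB (filterlim_Cmod a l Ha) (filterlim_const B)).
Qed.

Lemma filterlim_Cmod_ge {T} {F : (T -> Prop) -> Prop} {FF : ProperFilter F}
    (a : T -> C) (l : C) (B : R) :
  filterlim a F (locally l) -> F (fun n => B <= Cmod (a n)) -> B <= Cmod l.
Proof.
  intros Ha HB.
  exact (filterlim_le (F := F) _ _ B (Cmod l) HB (filterlim_const B) (filterlim_Cmod a l Ha)).
Qed.

Section Ultralimits.

Context (U : (nat -> Prop) -> Prop) {HU : FreeUltrafilter U}.

Lemma ultralim_real_exists (x : nat -> R) (B : R) :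
  (forall n, Rabs (x n) <= B) -> exists l : R, filterlim x U (locally l).
Proof.
  intro Hx.
  set (S t := U (fun n => t <= x n)).
  assert (HSub : bound S).
  { exists B. intros t Ht. destruct (filter_ex (F := U) _ Ht) as [n Hn].
    specialize (Hx n). apply Rabs_le_between in Hx. lra. }
  assert (HSne : exists t, S t).
  { exists (- B). apply (filter_forall (F := U)). intro n.
    specialize (Hx n). apply Rabs_le_between in Hx. lra. }
  destruct (completeness S HSub HSne) as [l [Hub Hlub]].
  exists l. apply filterlim_locally. intro eps.
  assert (Habove : U (fun n => ~ l + eps / 2 <= x n)).
  { destruct (uf_ultra (fun n => l + eps / 2 <= x n)) as [Hin | Hout]; [|exact Hout].
    specialize (Hub _ Hin). pose proof (cond_pos eps). lra. }
  assert (Hbelow : exists t, S t /\ l - eps / 2 < t).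
  { apply NNPP. intro Hno.
    assert (Hl : is_upper_bound S (l - eps / 2)).
    { intros t Ht. apply Rnot_lt_le. intro Hlt. apply Hno. eauto. }
    specialize (Hlub _ Hl). pose proof (cond_pos eps). lra. }
  destruct Hbelow as [t [Ht Hlt]].
  generalize (filter_and _ _ Ht Habove). apply filter_imp. intros n [H1 H2].
  apply Rnot_le_lt in H2. change (Rabs (x n - l) < eps).
  apply Rabs_lt_between. pose proof (cond_pos eps). lra.
Qed.

Lemma ultralim_exists (a : nat -> C) (B : R) :
  (forall n, Cmod (a n) <= B) -> exists l : C, filterlim a U (locally l).
Proof.
  intro Ha.
  destruct (ultralim_real_exists (fun n => fst (a n)) B) as [lr Hr].
  { intro n. eapply Rle_trans; [eapply Rle_trans; [apply Rmax_l | apply Rmax_Cmod] | apply Ha]. }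
  destruct (ultralim_real_exists (fun n => snd (a n)) B) as [li Hi].
  { intro n. eapply Rle_trans; [eapply Rle_trans; [apply Rmax_r | apply Rmax_Cmod] | apply Ha]. }
  exists (lr, li). apply filterlim_locally. intro eps.
  exact (filter_and _ _ (proj1 (filterlim_locally _ _) Hr eps)
                        (proj1 (filterlim_locally _ _) Hi eps)).
Qed.

(* junk value [0] when [a] has no U-limit, i.e. when [a] is unbounded *)
Definition ultralim (a : nat -> C) : C :=
  epsilon (inhabits (RtoC 0)) (fun l => filterlim a U (locally l)).

Lemma ultralim_eq (a : nat -> C) (l : C) :
  filterlim a U (locally l) -> ultralim a = l.
Proof.
  intro Ha.
  assert (Hspec : filterlim a U (locally (ultralim a))).
  { apply (epsilon_spec (inhabits (RtoC 0)) (fun l => filterlim a U (locally l))). eauto. }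
  exact (filterlim_locally_unique (K := C_AbsRing) (V := C_NormedModule) a _ _ Hspec Ha).
Qed.

Lemma ultralim_spec (a : nat -> C) (B : R) :
  (forall n, Cmod (a n) <= B) -> filterlim a U (locally (ultralim a)).
Proof.
  intro Ha. destruct (ultralim_exists a B Ha) as [l Hl]. rewrite (ultralim_eq a l Hl). exact Hl.
Qed.

End Ultralimits.

Lemma banach_sub_scale X nX a f : banach_sub X nX -> X f -> X (fscale a f).
Proof.
  intros (_ & _ & _ & Hcomb & _) Hf.
  replace (fscale a f) with (fadd (fscale a f) (fscale (RtoC 0) f)) by
    (apply functional_extensionality; intro z; unfold fadd, fscale; ring).
  exact (Hcomb _ _ _ _ Hf Hf).
Qed.

Lemma dual_respects_eqD X nX phi g f : banach_sub X nX -> in_dual X nX phi ->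
  X g -> X f -> eqD g f -> phi g = phi f.
Proof.
  intros (_ & _ & _ & Hcomb & _ & Hnorm0 & _) [Hlin [K HK]] Hg Hf Hgf.
  set (d := fadd (fscale (RtoC 1) g) (fscale (RtoC (-1)) f)).
  assert (Hd0 : nX d = 0).
  { apply Hnorm0; [exact (Hcomb _ _ _ _ Hg Hf)|].
    intros z Hz. unfold d, fadd, fscale, fzero. rewrite (Hgf z Hz). ring. }
  assert (Hphid : phi d = RtoC 0).
  { apply Cmod_eq_0. apply Rle_antisym; [|apply Cmod_ge_0].
    specialize (HK d (Hcomb _ _ _ _ Hg Hf)). rewrite Hd0, Rmult_0_r in HK. exact HK. }
  unfold d in Hphid. rewrite Hlin in Hphid by assumption.
  transitivity (Cplus (Cplus (Cmult (RtoC 1) (phi g)) (Cmult (RtoC (-1)) (phi f))) (phi f));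
    [ring | rewrite Hphid; ring].
Qed.

Lemma point_eval_in_dual X nX z : initial_space X nX -> inD z ->
  in_dual X nX (fun h => h z).
Proof.
  intros [HX [_ Hcompact]] Hz. split; [reflexivity|].
  pose proof HX as (_ & _ & _ & _ & Hnn & Hnorm0 & Hhom & _).
  apply NNPP; intro Hunb.
  assert (Hlarge : forall n : nat, exists g, (X g /\ nX g <= 1) /\ INR n < Cmod (g z)).
  { intro n. apply NNPP; intro Hno. apply Hunb. exists (INR n). intros h Hh.
    apply Rnot_lt_le; intro Hlt.
    assert (Hpos : 0 < nX h).
    { destruct (Hnn h Hh) as [Hp | H0]; [exact Hp|]. symmetry in H0.
      rewrite (proj1 (Hnorm0 h Hh) H0 z Hz), H0 in Hlt. unfold fzero in Hlt.
      rewrite Cmod_0, Rmult_0_r in Hlt. lra. }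
    pose proof (Rinv_0_lt_compat _ Hpos) as Hinv.
    apply Hno. exists (fscale (RtoC (/ nX h)) h). split; [split|].
    - exact (banach_sub_scale X nX _ h HX Hh).
    - rewrite Hhom, Cmod_R, Rabs_pos_eq, Rinv_l by (assumption || lra). apply Rle_refl.
    - unfold fscale. rewrite Cmod_mult, Cmod_R, Rabs_pos_eq by lra.
      apply (Rmult_lt_reg_l (nX h)); [exact Hpos|].
      rewrite <- Rmult_assoc, Rinv_r, Rmult_1_l; lra. }
  destruct (choice _ Hlarge) as [g Hg].
  destruct (Hcompact g (fun n => proj1 (Hg n))) as [phi [F [Hphi [_ Hconv]]]].
  destruct (Hconv (Cmod z) (conj (Cmod_ge_0 z) Hz) 1 Rlt_0_1) as [N HN].
  destruct (INR_unbounded (Cmod (F z) + 1)) as [m Hm].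
  destruct (eventually_subseq phi Hphi (fun k => (m <= k)%nat) (ex_intro _ m (fun k Hk => Hk)))
    as [N' HN'].
  set (n := max N N').
  specialize (HN n (Nat.le_max_l _ _) z (Rle_refl _)).
  assert (Hmn : INR m <= INR (phi n)) by (apply le_INR, HN', Nat.le_max_r).
  pose proof (Cmod_triangle (Cminus (g (phi n) z) (F z)) (F z)) as Htri.
  replace (Cplus (Cminus (g (phi n) z) (F z)) (F z)) with (g (phi n) z) in Htri by ring.
  pose proof (proj2 (Hg (phi n))). lra.
Qed.

Lemma dual_bound_relative X nX phi K f g c : banach_sub X nX ->
  dual_bound X nX phi K -> X f -> X g -> nX g <= c * nX f ->
  Cmod (phi g) <= c * nX f * K.
Proof.
  intros (_ & _ & _ & _ & Hnn & _) HK Hf Hg Hgf.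
  pose proof (HK f Hf). pose proof (HK g Hg). pose proof (Hnn f Hf). pose proof (Hnn g Hg).
  pose proof (Cmod_ge_0 (phi f)). pose proof (Cmod_ge_0 (phi g)).
  destruct (Rle_or_lt 0 K) as [HK0 | HK0]; [nra|].
  (* a negative bound forces [nX f = 0], hence [nX g = 0] *)
  assert (nX f = 0) by nra. assert (nX g = 0) by nra. nra.
Qed.

Section WeakUltralimits.

Context (X : (C -> C) -> Prop) (nX : (C -> C) -> R) (U : (nat -> Prop) -> Prop).
Context (HX : banach_sub X nX) {HU : FreeUltrafilter U}.

Lemma ultralim_in_dual (phis : nat -> (C -> C) -> C) (M : R) :
  (forall n, in_dual X nX (phis n)) -> (forall n, dual_bound X nX (phis n) M) ->
  in_dual X nX (fun h => ultralim U (fun n => phis n h)).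
Proof.
  intros Hlin HM.
  assert (Hlim : forall h, X h ->
    filterlim (fun n => phis n h) U (locally (ultralim U (fun n => phis n h)))).
  { intros h Hh. apply (ultralim_spec U _ (M * nX h)). intro n. exact (HM n h Hh). }
  split.
  - intros a b g h Hg Hh. apply (ultralim_eq U).
    apply (filterlim_ext (fun n => Cplus (Cmult a (phis n g)) (Cmult b (phis n h)))).
    + intro n. symmetry. exact (proj1 (Hlin n) a b g h Hg Hh).
    + apply filterlim_Clin_comb; auto.
  - exists M. intros h Hh. apply (filterlim_Cmod_le _ _ _ (Hlim h Hh)).
    apply filter_forall. intro n. exact (HM n h Hh).
Qed.

Lemma weak_ultralim_of_pointwise (f : C -> C) (fs : nat -> C -> C) (c : R) :
  reflexive X nX -> (forall z, inD z -> in_dual X nX (fun h => h z)) ->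
  X f -> (forall k, X (fs k) /\ nX (fs k) <= c * nX f) ->
  (forall z, inD z -> filterlim (fun k => fs k z) U (locally (f z))) ->
  forall phi, in_dual X nX phi -> filterlim (fun k => phi (fs k)) U (locally (phi f)).
Proof.
  intros HR Heval Hf Hfs Hpw.
  set (Phi := fun phi : (C -> C) -> C => ultralim U (fun k => phi (fs k))).
  assert (HPhi : forall phi K, dual_bound X nX phi K ->
    filterlim (fun k => phi (fs k)) U (locally (Phi phi))).
  { intros phi K HK. apply (ultralim_spec U _ (c * nX f * K)). intro k.
    exact (dual_bound_relative X nX phi K f (fs k) c HX HK Hf (proj1 (Hfs k)) (proj2 (Hfs k))). }
  assert (HPhi_bidual : in_bidual X nX Phi).
  { split.
    - intros a b phi psi [_ [K HK]] [_ [K' HK']]. apply (ultralim_eq U).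
      exact (filterlim_Clin_comb _ _ _ _ a b (HPhi phi K HK) (HPhi psi K' HK')).
    - exists (c * nX f). intros phi K _ HK. apply (filterlim_Cmod_le _ _ _ (HPhi phi K HK)).
      apply filter_forall. intro k.
      exact (dual_bound_relative X nX phi K f (fs k) c HX HK Hf (proj1 (Hfs k)) (proj2 (Hfs k))). }
  destruct (HR Phi HPhi_bidual) as [g [Hg HgPhi]].
  assert (Hgf : eqD g f).
  { intros z Hz. rewrite <- (HgPhi _ (Heval z Hz)). apply (ultralim_eq U). exact (Hpw z Hz). }
  intros phi Hphi.
  rewrite <- (dual_respects_eqD X nX phi g f HX Hphi Hg Hf Hgf), <- (HgPhi phi Hphi).
  destruct Hphi as [_ [K HK]]. exact (HPhi phi K HK).
Qed.

Lemma functionals_vanish_at_pointwise_limit (f : C -> C) (fs : nat -> C -> C) (c : R)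
    (phis : nat -> (C -> C) -> C) (M : R) :
  reflexive X nX -> (forall z, inD z -> in_dual X nX (fun h => h z)) ->
  X f -> (forall k, X (fs k) /\ nX (fs k) <= c * nX f) ->
  (forall z, inD z -> filterlim (fun k => fs k z) U (locally (f z))) ->
  (forall n, in_dual X nX (phis n)) -> (forall n, dual_bound X nX (phis n) M) ->
  (forall k, filterlim (fun n => phis n (fs k)) U (locally (RtoC 0))) ->
  filterlim (fun n => phis n f) U (locally (RtoC 0)).
Proof.
  intros HR Heval Hf Hfs Hpw Hphis HM Hvan.
  set (psi := fun h => ultralim U (fun n => phis n h)).
  assert (Hpsi_fs : forall k, psi (fs k) = RtoC 0) by (intro k; exact (ultralim_eq U _ _ (Hvan k))).
  assert (Hpsi_f : psi f = RtoC 0).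
  { assert (Hweak : filterlim (fun k => psi (fs k)) U (locally (psi f))).
    { exact (weak_ultralim_of_pointwise f fs c HR Heval Hf Hfs Hpw psi
               (ultralim_in_dual phis M Hphis HM)). }
    apply (filterlim_ext _ (fun _ => RtoC 0) Hpsi_fs) in Hweak.
    exact (filterlim_locally_unique (K := C_AbsRing) (V := C_NormedModule) _ _ _
             Hweak (filterlim_const (RtoC 0))). }
  rewrite <- Hpsi_f. apply (ultralim_spec U _ (M * nX f)). intro n. exact (HM n f Hf).
Qed.

End WeakUltralimits.

Definition radius (k : nat) : R := 1 - / (INR k + 2).

Lemma radius_bounds k : 0 <= radius k < 1.
Proof.
  unfold radius. pose proof (pos_INR k).
  assert (0 < / (INR k + 2)) by (apply Rinv_0_lt_compat; lra).
  assert (/ (INR k + 2) <= / 2) by (apply Rinv_le_contravar; lra). lra.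
Qed.

Lemma dil_radius_pointwise f z : holo f -> inD z ->
  filterlim (fun k => dil (radius k) f z) eventually (locally (f z)).
Proof.
  intros Hf Hz.
  assert (Hrz : filterlim (fun k => Cmult (RtoC (radius k)) z) eventually
                  (locally (T := AbsRing_UniformSpace C_AbsRing) z)).
  { apply (proj2 (filterlim_locally (U := AbsRing_UniformSpace C_AbsRing) (F := eventually) _ _)).
    intro eps.
    destruct (archimed_cor1 eps (cond_pos eps)) as [N [HN HN0]].
    exists N. intros n Hn. change (Cmod (Cminus (Cmult (RtoC (radius n)) z) z) < eps).
    replace (Cminus (Cmult (RtoC (radius n)) z) z) with (Cmult (RtoC (- / (INR n + 2))) z)
      by (unfold radius; rewrite RtoC_opp, RtoC_minus; ring).
    rewrite Cmod_mult, Cmod_R, Rabs_Ropp. unfold inD in Hz.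
    assert (0 < INR N) by (apply lt_0_INR; lia).
    assert (INR N <= INR n) by (apply le_INR; lia).
    assert (0 < / (INR n + 2)) by (apply Rinv_0_lt_compat; lra).
    assert (/ (INR n + 2) <= / INR N) by (apply Rinv_le_contravar; lra).
    rewrite Rabs_pos_eq by lra. pose proof (Cmod_ge_0 z). nra. }
  exact (filterlim_comp _ _ _ _ f _ _ _ Hrz (ex_derive_continuous f z (Hf z Hz))).
Qed.

Definition vanishes_at_boundary (q : C -> R) : Prop :=
  forall eps, 0 < eps -> exists delta, 0 < delta /\
    forall z, inD z -> 1 - delta < Cmod z -> q z < eps.

Lemma not_vanishing_at_boundary_seq (q : C -> R) : ~ vanishes_at_boundary q ->
  exists eps, 0 < eps /\ exists zs : nat -> C, (forall n, inD (zs n)) /\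
    (forall delta, 0 < delta -> eventually (fun n => 1 - delta < Cmod (zs n))) /\
    (forall n, eps <= q (zs n)).
Proof.
  intro Hnot. apply NNPP; intro Hno. apply Hnot. intros eps Heps. apply NNPP; intro Hfar.
  assert (Hz : forall n : nat, exists z, inD z /\ 1 - / (INR n + 1) < Cmod z /\ eps <= q z).
  { intro n. apply NNPP; intro Hn. apply Hfar. exists (/ (INR n + 1)).
    split; [apply Rinv_0_lt_compat; pose proof (pos_INR n); lra|].
    intros z HzD Hzn. apply Rnot_le_lt. intro Hq. apply Hn. eauto. }
  destruct (choice _ Hz) as [zs Hzs].
  apply Hno. exists eps. split; [exact Heps|]. exists zs. split; [|split].
  - intro n. apply Hzs.
  - intros delta Hdelta. destruct (archimed_cor1 delta Hdelta) as [N [HN HN0]].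
    exists N. intros n Hn. destruct (Hzs n) as (_ & Hzn & _).
    assert (0 < INR N) by (apply lt_0_INR; lia).
    assert (INR N <= INR n) by (apply le_INR; lia).
    assert (/ (INR n + 1) <= / INR N) by (apply Rinv_le_contravar; lra). lra.
  - intro n. apply Hzs.
Qed.

Lemma inD_locally z : inD z -> locally (T := AbsRing_UniformSpace C_AbsRing) z inD.
Proof.
  unfold inD. intro Hz. assert (Hr : 0 < (1 - Cmod z) / 2) by lra.
  exists (mkposreal _ Hr). intros w Hw. change C in w.
  change (Cmod (Cminus w z) < (1 - Cmod z) / 2) in Hw.
  pose proof (Cmod_triangle z (Cminus w z)) as Htri.
  replace (Cplus z (Cminus w z)) with w in Htri by ring. lra.
Qed.

Lemma is_derive_Cscal (F : C -> C) z d a :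
  is_derive (K := C_AbsRing) (V := C_NormedModule) F z d ->
  is_derive (K := C_AbsRing) (V := C_NormedModule) (fun x => Cmult a (F x)) z (Cmult a d).
Proof.
  intro dF.
  pose proof (filterdiff_scal_r_fct (K := C_AbsRing) (V := C_NormedModule) a _ _ Cmult_comm dF)
    as daF.
  eapply filterdiff_ext_lin; [exact daF|]. intro y.
  change (Cmult a (Cmult y d) = Cmult y (Cmult a d)). ring.
Qed.

Lemma C_derive_lin_comb (F G H : C -> C) z a b : holo F -> holo G -> inD z ->
  eqD H (fadd (fscale a F) (fscale b G)) ->
  C_derive H z = Cplus (Cmult a (C_derive F z)) (Cmult b (C_derive G z)).
Proof.
  intros HF HG Hz HH. apply is_C_derive_unique.
  apply (is_derive_ext_loc (fadd (fscale a F) (fscale b G))).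
  - generalize (inD_locally z Hz). apply filter_imp. intros t Ht. symmetry. exact (HH t Ht).
  - apply (is_derive_plus (V := C_NormedModule)); apply is_derive_Cscal;
      [exact (C_derive_correct F z z (HF z Hz)) | exact (C_derive_correct G z z (HG z Hz))].
Qed.

Lemma vanishing_at_boundary_of_dilations (v : C -> R) (X : (C -> C) -> Prop)
    (nX : (C -> C) -> R) (L : (C -> C) -> C -> C) (c M : R) :
  initial_space X nX -> reflexive X nX ->
  (forall f, X f -> forall r, 0 <= r < 1 -> X (dil r f) /\ nX (dil r f) <= c * nX f) ->
  (forall z, inD z -> 0 <= v z) ->
  (forall a b g h z, X g -> X h -> inD z ->
     L (fadd (fscale a g) (fscale b h)) z = Cplus (Cmult a (L g z)) (Cmult b (L h z))) ->
  (forall h z, X h -> inD z -> v z * Cmod (L h z) <= M * nX h) ->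
  forall f, X f ->
  (forall r, 0 <= r < 1 -> vanishes_at_boundary (fun z => v z * Cmod (L (dil r f) z))) ->
  vanishes_at_boundary (fun z => v z * Cmod (L f z)).
Proof.
  intros HI HR Hdil Hv Hlin Hbd f Hf Hvan.
  pose proof HI as [HX _].
  apply NNPP; intro Hnot.
  destruct (not_vanishing_at_boundary_seq _ Hnot) as [eps [Heps [zs [HzD [Hzs Hge]]]]].
  destruct free_ultrafilter_exists as [U].
  set (phis n h := Cmult (RtoC (v (zs n))) (L h (zs n))).
  assert (Hphis_mod : forall n h, Cmod (phis n h) = v (zs n) * Cmod (L h (zs n))).
  { intros n h. unfold phis. rewrite Cmod_mult, Cmod_R, Rabs_pos_eq; [reflexivity|].
    exact (Hv _ (HzD n)). }
  assert (Hphis_bd : forall n, dual_bound X nX (phis n) M).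
  { intros n h Hh. rewrite Hphis_mod. exact (Hbd h (zs n) Hh (HzD n)). }
  assert (Hphis_dual : forall n, in_dual X nX (phis n)).
  { intro n. split; [|exists M; exact (Hphis_bd n)].
    intros a b g h Hg Hh. unfold phis. rewrite Hlin by auto. ring. }
  assert (Hphis_dil : forall k,
    filterlim (fun n => phis n (dil (radius k) f)) U (locally (RtoC 0))).
  { intro k. apply (filterlim_filter_le_1 _ uf_free), filterlim_locally. intro e.
    destruct (Hvan (radius k) (radius_bounds k) e (cond_pos e)) as [delta [Hdelta Hsmall]].
    generalize (Hzs delta Hdelta). apply filter_imp. intros n Hn.
    apply C_NormedModule_mixin_compat1. change (Cmod (Cminus (phis n (dil (radius k) f)) 0) < e).
    replace (Cminus (phis n (dil (radius k) f)) 0) with (phis n (dil (radius k) f)) by ring.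
    rewrite Hphis_mod. exact (Hsmall _ (HzD n) Hn). }
  assert (Hlim : filterlim (fun n => phis n f) U (locally (RtoC 0))).
  { apply (functionals_vanish_at_pointwise_limit X nX U HX f (fun k => dil (radius k) f) c phis M);
      auto using point_eval_in_dual, radius_bounds.
    intros z Hz. apply (filterlim_filter_le_1 _ uf_free).
    exact (dil_radius_pointwise f z (proj1 HX f Hf) Hz). }
  assert (Hfar : eps <= Cmod (RtoC 0)).
  { apply (filterlim_Cmod_ge _ _ eps Hlim), filter_forall.
    intro n. rewrite Hphis_mod. apply Hge. }
  rewrite Cmod_0 in Hfar. lra.
Qed.

Theorem corollary3p2 :
  forall (v : C -> R) (X : (C -> C) -> Prop) (nX : (C -> C) -> R)
         (T : (C -> C) -> (C -> C)),
  typical_weight v ->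
  initial_space X nX ->
  reflexive X nX ->
  (exists Cst : R, forall f, X f -> forall r, 0 <= r < 1 ->
      X (dil r f) /\ nX (dil r f) <= Cst * nX f) ->
  intrinsic T ->
  ((forall f, X f -> forall r, 0 <= r < 1 -> Hv0 v (T (dil r f))) ->
     ((forall f, X f -> Hv v (T f)) /\ bounded_into_Hnorm X nX v T
      <-> (forall f, X f -> Hv0 v (T f)) /\ bounded_into_Hnorm X nX v T))
  /\
  ((forall f, X f -> forall r, 0 <= r < 1 -> Bv0 v (T (dil r f))) ->
     ((forall f, X f -> Bv v (T f)) /\ bounded_into_Bnorm X nX v T
      <-> (forall f, X f -> Bv0 v (T f)) /\ bounded_into_Bnorm X nX v T)).
Proof.
  intros v X nX T (_ & Hvpos & _) HI HR [c Hdil] [[HTholo [_ HTlin]] _].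
  pose proof HI as [[HXholo _] _].
  assert (Hv : forall z, inD z -> 0 <= v z) by (intros z Hz; apply Rlt_le, Hvpos, Hz).
  split; intro Hdil0; split.
  - intros [_ [M HM]]. split; [|exists M; exact HM]. intros f Hf.
    split; [exact (HTholo f (HXholo f Hf))|].
    apply (vanishing_at_boundary_of_dilations v X nX T c M HI HR Hdil Hv); auto.
    + intros a b g h z Hg Hh Hz. exact (HTlin a b g h (HXholo g Hg) (HXholo h Hh) z Hz).
    + intros r Hr. exact (proj2 (Hdil0 f Hf r Hr)).
  - intros [Hlo [M HM]]. split; [|exists M; exact HM]. intros f Hf.
    split; [exact (proj1 (Hlo f Hf))|]. exists (M * nX f). auto.
  - intros [_ [M HM]]. split; [|exists M; exact HM]. intros f Hf.
    split; [exact (HTholo f (HXholo f Hf))|].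
    apply (vanishing_at_boundary_of_dilations v X nX (fun h => C_derive (T h)) c M
             HI HR Hdil Hv); auto.
    + intros a b g h z Hg Hh Hz. apply C_derive_lin_comb; auto.
    + intros h z Hh Hz. pose proof (HM h Hh z Hz). pose proof (Cmod_ge_0 (T h (RtoC 0))). lra.
    + intros r Hr. exact (proj2 (Hdil0 f Hf r Hr)).
  - intros [Hlo [M HM]]. split; [|exists M; exact HM]. intros f Hf.
    split; [exact (proj1 (Hlo f Hf))|]. exists (M * nX f). intros z Hz.
    pose proof (HM f Hf z Hz). pose proof (Cmod_ge_0 (T f (RtoC 0))). lra.
Qed.
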